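(* Let $A$ be a commutative semiring and $a,b\in A$. Let $R(a,b)=\{(ax+by+z,\ bx+ay+z):x,y,z\in A\}$. Then $R(a,b)_+$ is a congruence on $A$, and $R(a,b)\subseteq\rho\subseteq R(a,b)_+\subseteq\rho_+$, where $\rho=\{(a,b)\}^{c}$.
   Context: Semirings are commutative with $0$ and $1\neq0$, $0a=0$; congruences are equivalence relations compatible with $+,\cdot$. For a relation $R$, $R_+=\{(u,v)\in A\times A:(u+c,v+c)\in R$ for some $c\in A\}$; $\{(a,b)\}^{c}$ is the congruence generated by the pair $(a,b)$. *)

From HB Require Import structures.
From mathcomp Require Import all_boot all_algebra.
Set Implicit Arguments. Unset Strict Implicit. Unset Printing Implicit Defensive.
Import GRing.Theory.
Local Open Scope ring_scope.

(* Commutative semiring with 0, 1 <> 0, 0a = 0: MathComp's comNzSemiRingType. *)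

Definition rel_sub (A : Type) (R S : A -> A -> Prop) : Prop :=
  forall u v, R u v -> S u v.

Definition is_congruence (A : comNzSemiRingType) (r : A -> A -> Prop) : Prop :=
  [/\ (forall x, r x x),
      (forall x y, r x y -> r y x),
      (forall x y z, r x y -> r y z -> r x z),
      (forall x y x' y', r x y -> r x' y' -> r (x + x') (y + y')) &
      (forall x y x' y', r x y -> r x' y' -> r (x * x') (y * y'))].

Definition rel_plus (A : comNzSemiRingType) (R : A -> A -> Prop) : A -> A -> Prop :=
  fun u v => exists c, R (u + c) (v + c).

Definition gen_congr (A : comNzSemiRingType) (a b : A) : A -> A -> Prop :=
  fun u v => forall r, is_congruence r -> r a b -> r u v.

Definition Rab (A : comNzSemiRingType) (a b : A) : A -> A -> Prop :=
  fun u v => exists x y z, u = a * x + b * y + z /\ v = b * x + a * y + z.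

From mathcomp Require Import all_boot all_algebra.
Set Implicit Arguments. Unset Strict Implicit. Unset Printing Implicit Defensive.
Local Open Scope ring_scope.
Import GRing.Theory.

(* R(a,b) contains (a,b) and is reflexive, symmetric, additive and stable under
   scaling; for any such relation R, adding a common summand to both sides of a
   chain u + c R v + c, v + d R w + d gives u + (c + v + d) R w + (c + v + d),
   so R_+ is a congruence.  Conversely every congruence containing (a,b)
   contains R(a,b), which yields the chain of inclusions. *)

Lemma addr3ACA (A : comNzSemiRingType) (p1 p2 p3 q1 q2 q3 : A) :
  (p1 + p2 + p3) + (q1 + q2 + q3) = (p1 + q1) + (p2 + q2) + (p3 + q3).
Proof. by rewrite addrACA [p1 + p2 + _]addrACA. Qed.

Lemma rel_plus_sub (A : comNzSemiRingType) (R S : A -> A -> Prop) :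
  rel_sub R S -> rel_sub (rel_plus R) (rel_plus S).
Proof. by move=> RS u v [c Ruv]; exists c; apply: RS. Qed.

Lemma gen_congr_min (A : comNzSemiRingType) (a b : A) (r : A -> A -> Prop) :
  is_congruence r -> r a b -> rel_sub (gen_congr a b) r.
Proof. by move=> r_congr rab u v; apply. Qed.

Section RelPlusCongruence.

Variables (A : comNzSemiRingType) (R : A -> A -> Prop).
Hypothesis R_refl : forall x, R x x.
Hypothesis R_sym : forall x y, R x y -> R y x.
Hypothesis R_add : forall x y x' y', R x y -> R x' y' -> R (x + x') (y + y').
Hypothesis R_mulr : forall x y t, R x y -> R (x * t) (y * t).

Lemma rel_plus_trans u v w :
  rel_plus R u v -> rel_plus R v w -> rel_plus R u w.
Proof.
move=> [c Ruv] [d Rvw]; exists (c + v + d).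
have := R_add Ruv Rvw.
have -> : u + c + (v + d) = u + (c + v + d) by rewrite !addrA.
by have -> : v + c + (w + d) = w + (c + v + d) by rewrite addrCA (addrC v c) -!addrA.
Qed.

Lemma rel_plus_mulr u v t : rel_plus R u v -> rel_plus R (u * t) (v * t).
Proof. by move=> [c Ruv]; exists (c * t); rewrite -!mulrDl; apply: R_mulr. Qed.

Lemma rel_plus_congruence : is_congruence (rel_plus R).
Proof.
split.
- by move=> x; exists 0.
- by move=> x y [c Rxy]; exists c; apply: R_sym.
- exact: rel_plus_trans.
- move=> x y x' y' [c Rxy] [c' Rxy']; exists (c + c').
  by rewrite [x + _ + _]addrACA [y + _ + _]addrACA; apply: R_add.
- move=> x y x' y' Rxy Rxy'; apply: (@rel_plus_trans _ (y * x')).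
    exact: rel_plus_mulr.
  by rewrite ![y * _]mulrC; apply: rel_plus_mulr.
Qed.

End RelPlusCongruence.

Section Rab.

Variables (A : comNzSemiRingType) (a b : A).

Lemma Rab_refl u : Rab a b u u.
Proof. by exists 0, 0, u; rewrite !mulr0 !add0r. Qed.

Lemma Rab_sym u v : Rab a b u v -> Rab a b v u.
Proof. by move=> [x [y [z [-> ->]]]]; exists y, x, z; rewrite ![_ * y + _]addrC. Qed.

Lemma RabD u v u' v' : Rab a b u v -> Rab a b u' v' -> Rab a b (u + u') (v + v').
Proof.
move=> [x [y [z [-> ->]]]] [x' [y' [z' [-> ->]]]].
by exists (x + x'), (y + y'), (z + z'); rewrite !addr3ACA -!mulrDr.
Qed.

Lemma RabMr u v t : Rab a b u v -> Rab a b (u * t) (v * t).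
Proof.
move=> [x [y [z [-> ->]]]].
by exists (x * t), (y * t), (z * t); rewrite !mulrDl !mulrA.
Qed.

Lemma Rab_pair : Rab a b a b.
Proof. by exists 1, 0, 0; rewrite !mulr1 !mulr0 !addr0. Qed.

Lemma Rab_sub_congruence (r : A -> A -> Prop) :
  is_congruence r -> r a b -> rel_sub (Rab a b) r.
Proof.
move=> [r_refl r_sym _ r_add r_mul] rab u v [x [y [z [-> ->]]]].
by apply: (r_add) => //; apply: (r_add); apply: (r_mul) => //; apply: r_sym.
Qed.

End Rab.

Theorem proposition2p21 (A : comNzSemiRingType) (a b : A) :
  is_congruence (rel_plus (Rab a b)) /\
  rel_sub (Rab a b) (gen_congr a b) /\
  rel_sub (gen_congr a b) (rel_plus (Rab a b)) /\
  rel_sub (rel_plus (Rab a b)) (rel_plus (gen_congr a b)).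
Proof.
have Rp_congr : is_congruence (rel_plus (Rab a b)).
  exact: rel_plus_congruence (@Rab_refl _ a b) (@Rab_sym _ a b)
                             (@RabD _ a b) (@RabMr _ a b).
have R_sub_gen : rel_sub (Rab a b) (gen_congr a b).
  by move=> u v Ruv r r_congr rab; apply: Rab_sub_congruence Ruv.
split=> //; split=> //; split; last exact: rel_plus_sub.
apply: gen_congr_min Rp_congr _.
by exists 0; rewrite !addr0; apply: Rab_pair.
Qed.
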